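(* Let $X$ be a Hausdorff complex topological vector space with $\dim X>1$. Let $\Gamma\subset\mathcal{B}(X)$ have the property that for all $T,S\in\Gamma$ with $T\neq S$ there exists $A\in\Gamma$ such that $T=AS$. If $\Gamma$ is supercyclic, then $\Gamma$ is supercyclic transitive.
   Context: $\mathcal{B}(X)$ denotes the space of continuous linear operators on $X$. For $\Gamma\subset\mathcal{B}(X)$ and $x\in X$, put $\mathbb{C}\,Orb(\Gamma,x)=\{\alpha Tx:\alpha\in\mathbb{C},\,T\in\Gamma\}$. The set $\Gamma$ is called supercyclic if there exists $x\in X$ such that $\mathbb{C}\,Orb(\Gamma,x)$ is dense in $X$. A set $\Gamma\subset\mathcal{B}(X)$ is called supercyclic transitive if, for each pair $(U,V)$ of nonempty open subsets of $X$, there exist $\alpha\in\mathbb{C}\setminus\{0\}$ and $T\in\Gamma$ such that $T(\alpha U)\cap V\neq\emptyset$. *)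

From Stdlib Require Import Reals.
Open Scope R_scope.

Record C : Type := mkC { Re : R; Im : R }.
Definition C0 : C := mkC 0 0.
Definition C1 : C := mkC 1 0.
Definition Cadd (a b : C) : C := mkC (Re a + Re b) (Im a + Im b).
Definition Copp (a : C) : C := mkC (- Re a) (- Im a).
Definition Cmul (a b : C) : C :=
  mkC (Re a * Re b - Im a * Im b) (Re a * Im b + Im a * Re b).
Definition Cabs (a : C) : R := sqrt (Re a * Re a + Im a * Im a).

Record CTVS : Type := {
  carrier :> Type;
  vzero : carrier;
  vadd : carrier -> carrier -> carrier;
  vopp : carrier -> carrier;
  vscal : C -> carrier -> carrier;
  is_open : (carrier -> Prop) -> Prop
}.

Arguments vzero {_}.
Arguments vadd {_} _ _.
Arguments vopp {_} _.
Arguments vscal {_} _ _.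
Arguments is_open {_} _.

Definition is_HausdorffCTVS (X : CTVS) : Prop :=
  (forall x y z : X, vadd x (vadd y z) = vadd (vadd x y) z) /\
  (forall x y : X, vadd x y = vadd y x) /\
  (forall x : X, vadd vzero x = x) /\
  (forall x : X, vadd x (vopp x) = vzero) /\
  (forall (a : C) (x y : X), vscal a (vadd x y) = vadd (vscal a x) (vscal a y)) /\
  (forall (a b : C) (x : X), vscal (Cadd a b) x = vadd (vscal a x) (vscal b x)) /\
  (forall (a b : C) (x : X), vscal a (vscal b x) = vscal (Cmul a b) x) /\
  (forall x : X, vscal C1 x = x) /\
  is_open (fun _ : X => True) /\
  is_open (fun _ : X => False) /\
  (forall U V : X -> Prop, is_open U -> is_open V ->
     is_open (fun x => U x /\ V x)) /\
  (forall F : (X -> Prop) -> Prop, (forall U, F U -> is_open U) ->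
     is_open (fun x => exists U, F U /\ U x)) /\
  (forall U V : X -> Prop, (forall x, U x <-> V x) -> is_open U -> is_open V) /\
  (forall (x y : X) (W : X -> Prop), is_open W -> W (vadd x y) ->
     exists U V : X -> Prop, is_open U /\ is_open V /\ U x /\ V y /\
       forall u v, U u -> V v -> W (vadd u v)) /\
  (forall (a : C) (x : X) (W : X -> Prop), is_open W -> W (vscal a x) ->
     exists (eps : R) (U : X -> Prop), eps > 0 /\ is_open U /\ U x /\
       forall b u, Cabs (Cadd b (Copp a)) < eps -> U u -> W (vscal b u)) /\
  (forall x y : X, x <> y ->
     exists U V : X -> Prop, is_open U /\ is_open V /\ U x /\ V y /\
       forall z, ~ (U z /\ V z)).

Definition dim_gt1 (X : CTVS) : Prop :=
  exists x y : X, forall a b : C,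
    vadd (vscal a x) (vscal b y) = vzero -> a = C0 /\ b = C0.

Definition is_bounded_op (X : CTVS) (T : X -> X) : Prop :=
  (forall x y : X, T (vadd x y) = vadd (T x) (T y)) /\
  (forall (a : C) (x : X), T (vscal a x) = vscal a (T x)) /\
  (forall W : X -> Prop, is_open W -> is_open (fun x => W (T x))).

Definition op_eq (X : CTVS) (T S : X -> X) : Prop := forall x, T x = S x.

Definition COrb (X : CTVS) (Gamma : (X -> X) -> Prop) (x : X) : X -> Prop :=
  fun y => exists (a : C) (T : X -> X), Gamma T /\ y = vscal a (T x).

Definition dense (X : CTVS) (D : X -> Prop) : Prop :=
  forall U : X -> Prop, is_open U -> (exists u, U u) -> exists y, U y /\ D y.

Definition supercyclic (X : CTVS) (Gamma : (X -> X) -> Prop) : Prop :=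
  exists x : X, dense X (COrb X Gamma x).

Definition supercyclic_transitive (X : CTVS) (Gamma : (X -> X) -> Prop) : Prop :=
  forall U V : X -> Prop, is_open U -> (exists u, U u) ->
    is_open V -> (exists v, V v) ->
    exists (a : C) (T : X -> X), a <> C0 /\ Gamma T /\
      exists u, U u /\ V (T (vscal a u)).

From Stdlib Require Import Reals Lra Psatz Classical ClassicalEpsilon.
Open Scope R_scope.

(* Take a supercyclic vector [x0] and orbit points [a1 T1 x0] in [U] and
   [a2 T2 x0] in [V] with [T2 <> T1]; then [T2 = A T1] for some [A] in Gamma,
   and [A] maps [(a2/a1) (a1 T1 x0)] into [V].  The point in [V] can be taken
   off the line [C (T1 x0)], which forces [T2 <> T1]: as [dim X > 1], [V] is
   not contained in this line, and the line is closed because [X] is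
   Hausdorff and [C] is complete. *)

Lemma C_ext (a b : C) : Re a = Re b -> Im a = Im b -> a = b.
Proof. destruct a, b; simpl; intros; subst; reflexivity. Qed.

Lemma C1_neq_C0 : C1 <> C0.
Proof. intros H; injection H; lra. Qed.

Definition Cnorm2 (a : C) : R := Re a * Re a + Im a * Im a.

Definition Cinv (b : C) : C := mkC (Re b / Cnorm2 b) (- Im b / Cnorm2 b).

Lemma Cnorm2_pos (b : C) : b <> C0 -> 0 < Cnorm2 b.
Proof.
  intros Hb. destruct b as [p q]; unfold Cnorm2; simpl.
  destruct (Req_dec p 0), (Req_dec q 0); subst;
    [exfalso; apply Hb; reflexivity | nra ..].
Qed.

Lemma Cmul_Vl (b : C) : b <> C0 -> Cmul (Cinv b) b = C1.
Proof.
  intros Hb. pose proof (Cnorm2_pos b Hb) as Hp.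
  unfold Cinv, Cnorm2 in *; destruct b as [p q]; simpl in *.
  apply C_ext; simpl; field; lra.
Qed.

Lemma Cmul_KV (a b : C) : b <> C0 -> Cmul (Cmul a (Cinv b)) b = a.
Proof.
  intros Hb. pose proof (Cnorm2_pos b Hb) as Hp.
  unfold Cinv, Cnorm2 in *; destruct a as [r s], b as [p q]; simpl in *.
  apply C_ext; simpl; field; lra.
Qed.

Lemma Cnorm2_real_mul_inv (s : R) (c : C) :
  c <> C0 -> Cnorm2 (Cmul (mkC s 0) (Cinv c)) = s * s / Cnorm2 c.
Proof.
  intros Hc. pose proof (Cnorm2_pos c Hc) as Hp.
  unfold Cinv, Cnorm2 in *; destruct c as [p q]; simpl in *.
  field; lra.
Qed.

Lemma Cabs_lt (z : C) (r : R) : 0 < r -> Cnorm2 z < r * r -> Cabs z < r.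
Proof.
  intros Hr Hz. unfold Cabs. rewrite <- (sqrt_square r) by lra.
  apply sqrt_lt_1_alt. unfold Cnorm2 in Hz. split; nra.
Qed.

Lemma Cabs_subrr_lt (a : C) (eps : R) : 0 < eps -> Cabs (Cadd a (Copp a)) < eps.
Proof. intros H; apply Cabs_lt; auto; unfold Cnorm2; simpl; nra. Qed.

Lemma Cabs_sub_lt (a b : C) (eps : R) : 0 < eps ->
  Rabs (Re a - Re b) < eps / 2 -> Rabs (Im a - Im b) < eps / 2 ->
  Cabs (Cadd a (Copp b)) < eps.
Proof.
  intros He Hre Him. apply Cabs_lt; auto. unfold Cnorm2; simpl.
  apply Rabs_def2 in Hre, Him. nra.
Qed.

Lemma Cnorm2_ge_of_large (c : C) (e : R) : 0 < e ->
  ~ (Rabs (Re c) < e /\ Rabs (Im c) < e) -> e * e <= Cnorm2 c.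
Proof.
  intros He Hc. unfold Cnorm2.
  pose proof (Rsqr_abs (Re c)); pose proof (Rsqr_abs (Im c)); unfold Rsqr in *.
  destruct (Rlt_or_le (Rabs (Re c)) e), (Rlt_or_le (Rabs (Im c)) e);
    [tauto | nra ..].
Qed.

Lemma inv_INR_S_eventually_lt (eps : R) : 0 < eps ->
  exists N, forall m, (N <= m)%nat -> / INR (S m) < eps.
Proof.
  intros He. destruct (archimed_cor1 eps He) as (N & HN & HN0).
  exists N; intros m Hm. eapply Rle_lt_trans; [|exact HN].
  apply Rinv_le_contravar; [apply lt_0_INR; lia | apply le_INR; lia].
Qed.

Lemma cauchy_limit_rate (u : nat -> R) :
  (forall n m, Rabs (u n - u m) <= / INR (S n) + / INR (S m)) ->
  exists l, forall n, Rabs (u n - l) <= / INR (S n).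
Proof.
  intros Hu.
  assert (Hc : Cauchy_crit u).
  { intros eps He. destruct (inv_INR_S_eventually_lt (eps / 2)) as [N HN]; [lra|].
    exists N; intros n m Hn Hm. unfold Rdist.
    pose proof (HN n Hn); pose proof (HN m Hm); specialize (Hu n m). lra. }
  destruct (R_complete u Hc) as [l Hl]. exists l; intros n.
  apply Rnot_lt_le; intros Hgap.
  set (d := Rabs (u n - l) - / INR (S n)).
  destruct (Hl (d / 2)) as [N1 HN1]; [unfold d; lra|].
  destruct (inv_INR_S_eventually_lt (d / 2)) as [N2 HN2]; [unfold d; lra|].
  set (m := Nat.max N1 N2).
  specialize (HN1 m ltac:(lia)); specialize (HN2 m ltac:(lia)); specialize (Hu n m).
  unfold Rdist in HN1.
  pose proof (Rabs_triang (u n - u m) (u m - l)) as T.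
  replace (u n - u m + (u m - l)) with (u n - l) in T by ring.
  unfold d in *; lra.
Qed.

Lemma Rabs_le_bounds (x a : R) : Rabs x <= a -> - a <= x <= a.
Proof. intros H. pose proof (Rle_abs x); pose proof (Rle_abs (- x)). rewrite Rabs_Ropp in *. lra. Qed.

Section HausdorffTVS.

Variable X : CTVS.
Hypothesis HX : is_HausdorffCTVS X.

Lemma vaddA (x y z : X) : vadd x (vadd y z) = vadd (vadd x y) z.
Proof. destruct HX as (H & _); apply H. Qed.

Lemma vaddC (x y : X) : vadd x y = vadd y x.
Proof. destruct HX as (_ & H & _); apply H. Qed.

Lemma vadd0l (x : X) : vadd vzero x = x.
Proof. destruct HX as (_ & _ & H & _); apply H. Qed.

Lemma vaddN (x : X) : vadd x (vopp x) = vzero.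
Proof. destruct HX as (_ & _ & _ & H & _); apply H. Qed.

Lemma vscalDr (a : C) (x y : X) : vscal a (vadd x y) = vadd (vscal a x) (vscal a y).
Proof. destruct HX as (_ & _ & _ & _ & H & _); apply H. Qed.

Lemma vscalDl (a b : C) (x : X) : vscal (Cadd a b) x = vadd (vscal a x) (vscal b x).
Proof. destruct HX as (_ & _ & _ & _ & _ & H & _); apply H. Qed.

Lemma vscalA (a b : C) (x : X) : vscal a (vscal b x) = vscal (Cmul a b) x.
Proof. destruct HX as (_ & _ & _ & _ & _ & _ & H & _); apply H. Qed.

Lemma vscal1 (x : X) : vscal C1 x = x.
Proof. destruct HX as (_ & _ & _ & _ & _ & _ & _ & H & _); apply H. Qed.

Lemma open_and (U V : X -> Prop) :
  is_open U -> is_open V -> is_open (fun x => U x /\ V x).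
Proof. destruct HX as (_ & _ & _ & _ & _ & _ & _ & _ & _ & _ & H & _); apply H. Qed.

Lemma open_locally (P : X -> Prop) :
  (forall x, P x -> exists O, is_open O /\ O x /\ forall y, O y -> P y) -> is_open P.
Proof.
  destruct HX as (_ & _ & _ & _ & _ & _ & _ & _ & _ & _ & _ & Hunion & Hext & _).
  intros HP.
  apply (Hext (fun x => exists O, (is_open O /\ forall y, O y -> P y) /\ O x)).
  - intros x; split.
    + intros (O & (_ & HOP) & Ox); auto.
    + intros Px. destruct (HP x Px) as (O & HO & Ox & HOP). exists O; auto.
  - apply Hunion. intros O [HO _]; exact HO.
Qed.

Lemma vadd_continuous (x y : X) (W : X -> Prop) : is_open W -> W (vadd x y) ->
  exists U V : X -> Prop, is_open U /\ is_open V /\ U x /\ V y /\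
    forall u v, U u -> V v -> W (vadd u v).
Proof. destruct HX as (_ & _ & _ & _ & _ & _ & _ & _ & _ & _ & _ & _ & _ & H & _); apply H. Qed.

Lemma vscal_continuous (a : C) (x : X) (W : X -> Prop) : is_open W -> W (vscal a x) ->
  exists (eps : R) (U : X -> Prop), eps > 0 /\ is_open U /\ U x /\
    forall b u, Cabs (Cadd b (Copp a)) < eps -> U u -> W (vscal b u).
Proof. destruct HX as (_ & _ & _ & _ & _ & _ & _ & _ & _ & _ & _ & _ & _ & _ & H & _); apply H. Qed.

Lemma hausdorff (x y : X) : x <> y ->
  exists U V : X -> Prop, is_open U /\ is_open V /\ U x /\ V y /\
    forall z, ~ (U z /\ V z).
Proof. destruct HX as (_ & _ & _ & _ & _ & _ & _ & _ & _ & _ & _ & _ & _ & _ & _ & H); apply H. Qed.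

Lemma vadd0r (x : X) : vadd x vzero = x.
Proof. rewrite vaddC; apply vadd0l. Qed.

Lemma vadd_eq_self (a b : X) : vadd a b = a -> b = vzero.
Proof.
  intros H.
  assert (E : vadd (vopp a) (vadd a b) = vadd (vopp a) a) by now rewrite H.
  now rewrite vaddA, (vaddC (vopp a) a), vaddN, vadd0l in E.
Qed.

Lemma vscal0l (x : X) : vscal C0 x = vzero.
Proof.
  apply (vadd_eq_self (vscal C0 x)).
  rewrite <- vscalDl. f_equal. apply C_ext; simpl; ring.
Qed.

Lemma vscal0r (a : C) : vscal a (@vzero X) = vzero.
Proof. apply (vadd_eq_self (vscal a vzero)). now rewrite <- vscalDr, vadd0l. Qed.

Lemma open_vscal_preimage (beta : C) (W : X -> Prop) :
  is_open W -> is_open (fun u => W (vscal beta u)).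
Proof.
  intros HW. apply open_locally. intros x Hx.
  destruct (vscal_continuous beta x W HW Hx) as (eps & O & Heps & HO & Ox & HOW).
  exists O; repeat split; auto. intros y Oy. apply HOW; auto. apply Cabs_subrr_lt; lra.
Qed.

Definition off_line (w y : X) : Prop := forall c : C, y <> vscal c w.

Lemma off_line_vscal_neq0 (w y : X) (a : C) : off_line w (vscal a y) -> a <> C0.
Proof. intros H ->. apply (H C0). now rewrite !vscal0l. Qed.

(* [G] is [N / s], where scalars [|b| < eta] map [N] into a set missing [w]:
   if [c w] were in [G] with [c] large, then [b := s / c] would be small and
   [b (c w / s) = w]. *)
Lemma line_coef_small_near0 (w : X) (e : R) : w <> vzero -> 0 < e ->
  exists G : X -> Prop, is_open G /\ G vzero /\
    forall c, G (vscal c w) -> Rabs (Re c) < e /\ Rabs (Im c) < e.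
Proof.
  intros Hw He.
  destruct (hausdorff w vzero Hw) as (Nw & G0 & _ & HG0 & Nww & G0_0 & Hd).
  assert (G0' : G0 (vscal C0 vzero)) by now rewrite vscal0l.
  destruct (vscal_continuous C0 vzero G0 HG0 G0') as (eta & N & Heta & HN & N0 & HNG).
  set (s := e * eta / 2).
  assert (Hs : 0 < s) by (unfold s; nra).
  exists (fun u => N (vscal (mkC (/ s) 0) u)).
  split; [now apply open_vscal_preimage|]. split; [now rewrite vscal0r|].
  intros c Hc. apply NNPP; intros Hlarge.
  pose proof (Cnorm2_ge_of_large c e He Hlarge) as Hce.
  assert (Hc0 : c <> C0) by (intros ->; unfold Cnorm2 in Hce; simpl in Hce; nra).
  set (b := Cmul (mkC s 0) (Cinv c)).
  assert (Hb : G0 (vscal b (vscal (mkC (/ s) 0) (vscal c w)))).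
  { apply HNG; auto. apply Cabs_lt; auto.
    replace (Cadd b (Copp C0)) with b by (apply C_ext; simpl; ring).
    unfold b; rewrite Cnorm2_real_mul_inv by exact Hc0.
    apply (Rle_lt_trans _ (s * s / (e * e))).
    - apply Rmult_le_compat_l; [nra|]. apply Rinv_le_contravar; nra.
    - unfold s. field_simplify; nra. }
  rewrite !vscalA in Hb.
  replace (Cmul (Cmul b (mkC (/ s) 0)) c) with C1 in Hb.
  - rewrite vscal1 in Hb. now apply (Hd w).
  - unfold b. pose proof (Cnorm2_pos c Hc0) as Hp.
    unfold Cinv, Cnorm2 in *; destruct c as [p q]; apply C_ext; simpl in *; field; lra.
Qed.

Lemma line_coef_close_near (w p : X) (e : R) : w <> vzero -> 0 < e ->
  exists O : X -> Prop, is_open O /\ O p /\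
    forall a b, O (vscal a w) -> O (vscal b w) ->
      Rabs (Re a - Re b) < e /\ Rabs (Im a - Im b) < e.
Proof.
  intros Hw He.
  destruct (line_coef_small_near0 w e Hw He) as (G & HG & G0 & HGc).
  set (m1 := mkC (-1) 0).
  assert (Gp : G (vadd p (vscal m1 p))).
  { rewrite <- (vscal1 p) at 1. rewrite <- vscalDl.
    replace (Cadd C1 m1) with C0 by (apply C_ext; simpl; ring). now rewrite vscal0l. }
  destruct (vadd_continuous _ _ G HG Gp) as (U1 & V1 & HU1 & HV1 & U1p & V1p & HUV).
  destruct (vscal_continuous m1 p V1 HV1 V1p) as (eps & U2 & Heps & HU2 & U2p & HUW).
  exists (fun x => U1 x /\ U2 x). split; [now apply open_and|]. split; [auto|].
  intros a b [Ha1 Ha2] [Hb1 Hb2].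
  assert (Hab : G (vadd (vscal a w) (vscal m1 (vscal b w)))).
  { apply HUV; auto. apply HUW; auto. apply Cabs_subrr_lt; lra. }
  rewrite vscalA, <- vscalDl in Hab. apply HGc in Hab.
  destruct a as [ra ia], b as [rb ib]; unfold m1 in Hab; simpl in *.
  replace (ra - rb) with (ra + (-1 * rb - 0 * ib)) by ring.
  replace (ia - ib) with (ia + (-1 * ib + 0 * rb)) by ring. exact Hab.
Qed.

(* The coefficients of points of the line near [p] form a Cauchy net; its
   limit [l] is found along a sequence [c k] with [c k w] in the neighbourhood
   [O k] of [p] of coefficient diameter [1/(k+1)]. *)
Lemma adherent_line_coef_limit (w p : X) : w <> vzero ->
  (forall P, is_open P -> P p -> exists c, P (vscal c w)) ->
  exists l : C, forall e, 0 < e -> forall P, is_open P -> P p ->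
    exists c, P (vscal c w) /\ Rabs (Re c - Re l) < e /\ Rabs (Im c - Im l) < e.
Proof.
  intros Hw Hadh.
  destruct (choice (fun (k : nat) (O : X -> Prop) => is_open O /\ O p /\
     forall a b, O (vscal a w) -> O (vscal b w) ->
       Rabs (Re a - Re b) < / INR (S k) /\ Rabs (Im a - Im b) < / INR (S k)))
    as [O HO].
  { intros k. apply line_coef_close_near; auto. apply Rinv_0_lt_compat, lt_0_INR; lia. }
  destruct (choice (fun k c => O k (vscal c w))) as [c Hc].
  { intros k. destruct (HO k) as (HOk & Okp & _). now apply Hadh. }
  assert (Hmeet : forall j k, exists d,
    (Rabs (Re d - Re (c j)) < / INR (S j) /\ Rabs (Im d - Im (c j)) < / INR (S j)) /\
    (Rabs (Re d - Re (c k)) < / INR (S k) /\ Rabs (Im d - Im (c k)) < / INR (S k))).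
  { intros j k.
    destruct (HO j) as (HOj & Ojp & Hj), (HO k) as (HOk & Okp & Hk).
    destruct (Hadh (fun x => O j x /\ O k x)) as (d & Odj & Odk);
      [now apply open_and | now split |].
    exists d; split; [apply Hj | apply Hk]; auto. }
  destruct (cauchy_limit_rate (fun k => Re (c k))) as [r Hr].
  { intros j k. destruct (Hmeet j k) as (d & [Hj _] & [Hk _]).
    apply Rabs_def2 in Hj, Hk. apply Rabs_le; lra. }
  destruct (cauchy_limit_rate (fun k => Im (c k))) as [s Hs].
  { intros j k. destruct (Hmeet j k) as (d & [_ Hj] & [_ Hk]).
    apply Rabs_def2 in Hj, Hk. apply Rabs_le; lra. }
  exists (mkC r s). intros e He P HP Pp.
  destruct (inv_INR_S_eventually_lt (e / 2)) as [k Hk]; [lra|].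
  specialize (Hk k (le_n k)).
  destruct (HO k) as (HOk & Okp & Hclose).
  destruct (Hadh (fun x => P x /\ O k x)) as (d & Pd & Okd);
    [now apply open_and | now split |].
  exists d; split; [exact Pd|]; simpl.
  destruct (Hclose d (c k) Okd (Hc k)) as [Hre Him].
  specialize (Hr k); specialize (Hs k); cbv beta in Hr, Hs.
  apply Rabs_def2 in Hre, Him. apply Rabs_le_bounds in Hr, Hs.
  split; apply Rabs_def1; lra.
Qed.

Lemma open_off_line (w : X) : is_open (off_line w).
Proof.
  apply open_locally. intros p Hp.
  destruct (classic (w = vzero)) as [-> | Hw].
  { assert (Hp0 : p <> vzero) by (intros ->; apply (Hp C0); now rewrite vscal0r).
    destruct (hausdorff p vzero Hp0) as (P & Q & HP & _ & Pp & Q0 & Hd).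
    exists P; repeat split; auto. intros y Py c ->. rewrite vscal0r in Py.
    now apply (Hd vzero). }
  apply NNPP; intros Hn.
  assert (Hadh : forall P, is_open P -> P p -> exists c, P (vscal c w)).
  { intros P HP Pp. apply NNPP; intros Hmiss. apply Hn. exists P; repeat split; auto.
    intros y Py c ->. apply Hmiss; eauto. }
  destruct (adherent_line_coef_limit w p Hw Hadh) as [l Hl].
  destruct (hausdorff p (vscal l w) (Hp l)) as (P & Q & HP & HQ & Pp & Ql & Hd).
  destruct (vscal_continuous l w Q HQ Ql) as (del & W & Hdel & _ & Ww & HWQ).
  destruct (Hl (del / 2) ltac:(lra) P HP Pp) as (c & Pc & Hre & Him).
  apply (Hd (vscal c w)); split; auto.
  apply HWQ; auto. now apply Cabs_sub_lt.
Qed.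

Lemma exists_off_line (w : X) : dim_gt1 X -> exists z, off_line w z.
Proof.
  intros (x & y & Hindep).
  assert (Hx0 : x <> vzero).
  { intros ->. destruct (Hindep C1 C0) as [H1 _].
    - now rewrite vscal0r, vscal0l, vadd0r.
    - exact (C1_neq_C0 H1). }
  destruct (classic (off_line w x)) as [Hx | Hx]; [eauto|].
  destruct (classic (off_line w y)) as [Hy | Hy]; [eauto|].
  apply not_all_not_ex in Hx as [a Ha], Hy as [b Hb].
  exfalso.
  destruct (Hindep b (Copp a)) as [_ Ha0].
  - rewrite Ha, Hb, !vscalA, <- vscalDl.
    replace (Cadd (Cmul b a) (Cmul (Copp a) b)) with C0
      by (apply C_ext; simpl; ring).
    apply vscal0l.
  - apply Hx0. rewrite Ha.
    replace a with C0 by (destruct a; injection Ha0; intros; apply C_ext; simpl; lra).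
    apply vscal0l.
Qed.

(* A point [a w] of [V] is pushed off the line by a small multiple of a
   vector [z] off the line. *)
Lemma open_meets_off_line (V : X -> Prop) (w : X) : dim_gt1 X ->
  is_open V -> (exists v, V v) -> exists y, V y /\ off_line w y.
Proof.
  intros Hdim HV [v Vv].
  destruct (classic (off_line w v)) as [Hv | Hv]; [eauto|].
  apply not_all_not_ex in Hv as [a ->].
  destruct (exists_off_line w Hdim) as [z Hz].
  assert (Vaz : V (vadd (vscal a w) (vscal C0 z))) by now rewrite vscal0l, vadd0r.
  destruct (vadd_continuous _ _ V HV Vaz) as (V1 & V2 & _ & HV2 & V1a & V2z & HV12).
  destruct (vscal_continuous C0 z V2 HV2 V2z) as (eps & W & Heps & _ & Wz & HW).
  set (t := mkC (eps / 2) 0).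
  assert (Ht0 : t <> C0) by (intros E; injection E; lra).
  exists (vadd (vscal a w) (vscal t z)). split.
  { apply HV12; auto. apply HW; auto. apply Cabs_lt; auto. unfold Cnorm2, t; simpl; nra. }
  intros c Hc.
  assert (Htz : vscal t z = vscal (Cadd (Copp a) c) w).
  { rewrite vscalDl, <- Hc, vaddA, <- vscalDl.
    replace (Cadd (Copp a) a) with C0 by (apply C_ext; simpl; ring).
    now rewrite vscal0l, vadd0l. }
  apply (Hz (Cmul (Cinv t) (Cadd (Copp a) c))).
  now rewrite <- vscalA, <- Htz, vscalA, Cmul_Vl, vscal1.
Qed.

Lemma dense_meets_off_line (D V : X -> Prop) (w : X) : dim_gt1 X -> dense X D ->
  is_open V -> (exists v, V v) -> exists y, D y /\ V y /\ off_line w y.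
Proof.
  intros Hdim HD HV HVne.
  destruct (HD (fun y => V y /\ off_line w y)) as (y & [Vy Hy] & Dy).
  - apply open_and; [exact HV | apply open_off_line].
  - now apply open_meets_off_line.
  - eauto.
Qed.

Lemma orbit_transition (Gamma : (X -> X) -> Prop)
  (HGamma : forall T, Gamma T -> is_bounded_op X T)
  (Hcomp : forall T S, Gamma T -> Gamma S -> ~ op_eq X T S ->
     exists A, Gamma A /\ op_eq X T (fun x => A (S x)))
  (x0 : X) (a1 a2 : C) (T1 T2 : X -> X) :
  Gamma T1 -> Gamma T2 -> ~ op_eq X T2 T1 -> a1 <> C0 -> a2 <> C0 ->
  exists (a : C) (A : X -> X), a <> C0 /\ Gamma A /\
    A (vscal a (vscal a1 (T1 x0))) = vscal a2 (T2 x0).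
Proof.
  intros G1 G2 HT Ha1 Ha2.
  destruct (Hcomp T2 T1 G2 G1 HT) as (A & GA & HA).
  exists (Cmul a2 (Cinv a1)), A. split; [|split; [exact GA|]].
  - intros E. apply Ha2. rewrite <- (Cmul_KV a2 a1 Ha1), E.
    apply C_ext; simpl; ring.
  - destruct (HGamma A GA) as (_ & HAscal & _).
    now rewrite vscalA, Cmul_KV, HAscal, <- HA.
Qed.

End HausdorffTVS.

Theorem theorem3p8 (X : CTVS) (HX : is_HausdorffCTVS X) (Hdim : dim_gt1 X)
  (Gamma : (X -> X) -> Prop)
  (HGamma : forall T, Gamma T -> is_bounded_op X T)
  (Hcomp : forall T S, Gamma T -> Gamma S -> ~ op_eq X T S ->
     exists A, Gamma A /\ op_eq X T (fun x => A (S x))) :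
  supercyclic X Gamma -> supercyclic_transitive X Gamma.
Proof.
  intros [x0 Hden] U V HU HUne HV HVne.
  (* Off the line through [0] means nonzero. *)
  destruct (dense_meets_off_line X HX _ U vzero Hdim Hden HU HUne)
    as (y1 & (a1 & T1 & G1 & ->) & Uy1 & Hy1).
  destruct (dense_meets_off_line X HX _ V (T1 x0) Hdim Hden HV HVne)
    as (y2 & (a2 & T2 & G2 & ->) & Vy2 & Hy2).
  assert (HT : ~ op_eq X T2 T1) by (intros E; apply (Hy2 a2); now rewrite E).
  destruct (orbit_transition X HX Gamma HGamma Hcomp x0 a1 a2 T1 T2 G1 G2 HT
              (off_line_vscal_neq0 X HX _ _ _ Hy1) (off_line_vscal_neq0 X HX _ _ _ Hy2))
    as (a & A & Ha & GA & HA).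
  exists a, A; repeat split; auto.
  exists (vscal a1 (T1 x0)); split; [exact Uy1 | now rewrite HA].
Qed.
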